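(* Let $f:\mathbb{Z}^n\to\mathbb{R}\cup\{+\infty\}$ be M-convex and $y\in\operatorname{dom} f$ with $\phi(y)<0$. Let $i\in N$ satisfy $f'(y;i,j)>\phi(y)$ for every $j\in N\setminus\{i\}$, and let $h,k\in N$ be distinct with $f'(y;h,k)=\phi(y)$. Then $f'(y+\chi_h-\chi_k;i,j)>\phi(y)$ for every $j\in N\setminus\{i\}$.
   Context: $N=\{1,\dots,n\}$; $\chi_i\in\{0,1\}^n$ is the $i$-th unit vector. For $f:\mathbb{Z}^n\to\mathbb{R}\cup\{+\infty\}$, $\operatorname{dom} f=\{x\in\mathbb{Z}^n: f(x)<+\infty\}$. $f$ is M-convex if $\operatorname{dom} f\neq\emptyset$ and for all $x,y\in\operatorname{dom} f$ and every $i$ with $x(i)>y(i)$ there is $j$ with $x(j)<y(j)$ such that $f(x)+f(y)\ge f(x-\chi_i+\chi_j)+f(y+\chi_i-\chi_j)$. For $x\in\operatorname{dom} f$ and $i,j\in N$, $f'(x;i,j)=f(x+\chi_i-\chi_j)-f(x)$ (possibly $+\infty$; $f'(x;i,i)=0$), and $\phi(x)=\min_{i,j\in N}f'(x;i,j)$. *)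

From HB Require Import structures.
From mathcomp Require Import all_boot all_order all_algebra.
From mathcomp Require Import reals constructive_ereal.
Set Implicit Arguments. Unset Strict Implicit. Unset Printing Implicit Defensive.
Import Order.TTheory GRing.Theory Num.Theory.
Local Open Scope ring_scope.
Local Open Scope ereal_scope.

(* Z^n is represented by integer row vectors 'rV[int]_n; coordinates are
   indexed by 'I_n (= {0,...,n-1}, standing for N = {1,...,n}). *)

Definition chi (n : nat) (i : 'I_n) : 'rV[int]_n := delta_mx ord0 i.

Section MConvex.
Variables (R : realType) (n : nat).
Implicit Types (f : 'rV[int]_n -> \bar R) (x y : 'rV[int]_n) (i j : 'I_n).

Definition dom f x : Prop := f x < +oo.

Definition Mconvex f : Prop :=
  (exists x, dom f x) /\
  forall x y, dom f x -> dom f y ->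
  forall i, (y ord0 i < x ord0 i)%R ->
  exists j, (x ord0 j < y ord0 j)%R /\
    f (x - chi i + chi j)%R + f (y + chi i - chi j)%R <= f x + f y.

Definition fprime f x i j : \bar R := f (x + chi i - chi j)%R - f x.

Definition phi f x : \bar R :=
  \big[Order.min/+oo]_(i < n) \big[Order.min/+oo]_(j < n) fprime f x i j.

End MConvex.

From HB Require Import structures.
From mathcomp Require Import all_boot all_order all_algebra.
From mathcomp Require Import reals constructive_ereal.
From mathcomp Require Import lra zify.
Set Implicit Arguments. Unset Strict Implicit.
Import Order.TTheory GRing.Theory Num.Theory.
Local Open Scope ring_scope.
Local Open Scope ereal_scope.

(* Write a := phi(y) and z := y + chi_h - chi_k, so that f(z) = f(y) + a; the
   claim is f(z + chi_i - chi_j) > f(y) + 2a.  If k = i the point is a single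
   exchange away from y, hence has value >= f(y) + a > f(y) + 2a.  Otherwise
   w := z + chi_i - chi_j exceeds y in coordinate i, and the exchange axiom
   applied to (w, y, i) yields some l in {k, j} with
   f(w - chi_i + chi_l) + f(y + chi_i - chi_l) <= f(w) + f(y).  The first term
   is a single exchange away from y (>= f(y) + a), the second is strictly
   above f(y) + a because l <> i. *)

Section FprimeBounds.
Variables (R : realType) (n : nat) (f : 'rV[int]_n -> \bar R).

Lemma phi_le_fprime x a b : phi f x <= fprime f x a b.
Proof. exact: le_trans (bigmin_le _ a _) (bigmin_le _ b _). Qed.

Lemma lee_fprime x (fx e : R) a b : f x = fx%:E ->
  (e%:E <= fprime f x a b) = ((fx + e)%:E <= f (x + chi a - chi b)%R).
Proof. by move=> fxE; rewrite /fprime fxE leeBrDl // EFinD. Qed.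

Lemma lte_fprime x (fx e : R) a b : f x = fx%:E ->
  (e%:E < fprime f x a b) = ((fx + e)%:E < f (x + chi a - chi b)%R).
Proof. by move=> fxE; rewrite /fprime fxE lteBrDl // EFinD. Qed.

End FprimeBounds.

Section TwoStepBound.
Variables (R : realType) (n : nat) (f : 'rV[int]_n -> \bar R).
Hypothesis f_ninfty : forall x, f x != -oo.
Hypothesis fM : Mconvex f.
Variables (y : 'rV[int]_n) (fy a : R) (i : 'I_n).
Hypothesis fyE : f y = fy%:E.
Hypothesis exchange_ge : forall p q, (fy + a)%:E <= f (y + chi p - chi q)%R.
Hypothesis exchange_i_gt : forall q, q != i -> (fy + a)%:E < f (y + chi i - chi q)%R.

Lemma Mconvex_two_step_gt h k j : k != i -> j != i ->
  (fy + a + a)%:E < f (y + chi h - chi k + chi i - chi j)%R.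
Proof.
move=> ki ji; set w := (y + chi h - chi k + chi i - chi j)%R.
case wE: (f w) => [c||]; [|by rewrite ltey|by have := f_ninfty w; rewrite wE].
have w_dom : dom f w by rewrite /dom wE ltey.
have y_dom : dom f y by rewrite /dom fyE ltey.
have coord_w c' : w ord0 c' =
    (y ord0 c' + (h == c')%:R - (k == c')%:R + (i == c')%:R - (j == c')%:R)%R.
  by rewrite !mxE eqxx /= (eq_sym c' h) (eq_sym c' k) (eq_sym c' i) (eq_sym c' j).
have yi_lt_wi : (y ord0 i < w ord0 i)%R.
  by rewrite coord_w eqxx (negbTE ki) (negbTE ji); case: (h == i); lia.
have [l [wl_lt_yl exch]] := fM.2 w y w_dom y_dom i yi_lt_wi.
have l_kj : (l == k) || (l == j).
  apply/negPn/negP; rewrite negb_or => /andP[lk lj].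
  move: wl_lt_yl; rewrite coord_w [k == l]eq_sym [j == l]eq_sym (negbTE lk) (negbTE lj).
  by case: (h == l); case: (i == l); lia.
have li : l != i by case/orP: l_kj => /eqP ->.
have back_ge : (fy + a)%:E <= f (w - chi i + chi l)%R.
  case/orP: l_kj => /eqP ->.
    rewrite /w addrAC (addrAC _ (- chi j)%R) (addrAC _ (chi i)) subrK addrAC addrK.
    exact: exchange_ge.
  by rewrite /w addrAC subrK addrK; exact: exchange_ge.
move: exch back_ge (exchange_i_gt li); rewrite wE fyE.
move: (f_ninfty (w - chi i + chi l)%R) (f_ninfty (y + chi i - chi l)%R).
case: (f (w - chi i + chi l)%R) => [p||] //; case: (f (y + chi i - chi l)%R) => [q||] //.
by rewrite -!EFinD !lee_fin !lte_fin => _ _ ? ? ?; lra.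
Qed.

End TwoStepBound.

Theorem mainTheorem3 (R : realType) (n : nat) (f : 'rV[int]_n -> \bar R)
  (f_ninfty : forall x, f x != -oo)
  (fM : Mconvex f)
  (y : 'rV[int]_n) (ydom : dom f y) (phineg : phi f y < 0)
  (i : 'I_n) (hi : forall j : 'I_n, j != i -> phi f y < fprime f y i j)
  (h k : 'I_n) (hk : h != k) (hhk : fprime f y h k = phi f y) :
  forall j : 'I_n, j != i ->
    phi f y < fprime f (y + chi h - chi k)%R i j.
Proof.
move=> j ji; set z := (y + chi h - chi k)%R.
case fyE: (f y) ydom (f_ninfty y) => [fy||] //; [|by rewrite /dom fyE ltxx].
move=> _ _; rewrite /fprime fyE -/z in hhk.
case fzE: (f z) hhk phineg (f_ninfty z) => [fz||] //; last by move=> <-.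
move=> fz_phi a_neg _; set a := (fz - fy)%R.
have phiE : phi f y = a%:E by rewrite -fz_phi.
rewrite phiE in a_neg hi; rewrite lte_fin in a_neg.
have exchange_ge p q : (fy + a)%:E <= f (y + chi p - chi q)%R.
  by rewrite -lee_fprime // -phiE phi_le_fprime.
have exchange_i_gt q : q != i -> (fy + a)%:E < f (y + chi i - chi q)%R.
  by move=> qi; rewrite -lte_fprime // hi.
rewrite phiE (lte_fprime _ _ _ fzE) // (_ : fz = fy + a)%R; last by rewrite /a; lra.
have [ki|ki] := eqVneq k i.
  rewrite /z ki subrK; apply: lt_le_trans (exchange_ge h j).
  by rewrite lte_fin; lra.
by rewrite /z; apply: Mconvex_two_step_gt.
Qed.
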